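(* Let $X$ be a real reflexive Banach space and let $f \in X^* \setminus \{0\}$. Put $G = \{x \in X : f(x) \le 0\}$. If $G$ is an existence set, then $\ker(f)$ is one-complemented in $X$.
   Context: For a non-empty set $F \subset X$ and $x \in X$, let $R_F(x) = \{ d \in F : \|d-c\| \le \|x-c\| \text{ for all } c \in F\}$. A non-empty set $F \subset X$ is an existence set if $R_F(x) \neq \emptyset$ for every $x \in X$. A closed linear subspace $V$ of $X$ is one-complemented if there exists a continuous linear projection of norm one from $X$ onto $V$. *)

From HB Require Import structures.
From mathcomp Require Import all_boot all_order all_algebra.
From mathcomp Require Import all_classical all_reals all_analysis.
Set Implicit Arguments. Unset Strict Implicit. Unset Printing Implicit Defensive.
Import Order.TTheory GRing.Theory Num.Theory.
Import numFieldNormedType.Exports.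
Local Open Scope classical_set_scope.
Local Open Scope ring_scope.

Section Defs.
Variables (R : realType) (X : normedModType R).

Definition lin_functional (f : X -> R) : Prop :=
  forall (a : R) (x y : X), f (a *: x + y) = a * f x + f y.

Definition lin_map (P : X -> X) : Prop :=
  forall (a : R) (x y : X), P (a *: x + y) = a *: P x + P y.

Definition in_dual (f : X -> R) : Prop := lin_functional f /\ continuous f.

Definition dual_bound (f : X -> R) (M : R) : Prop :=
  forall x : X, `|f x| <= M * `|x|.

(* Reflexivity: the canonical embedding J : X -> X^** is surjective, i.e.
   every bounded linear functional Phi on X^* (operator norm) is evaluation
   at some point of X. *)
Definition reflexive_space : Prop :=
  forall Phi : (X -> R) -> R,
    (forall (a : R) (f g : X -> R), in_dual f -> in_dual g ->
        Phi (fun x => a * f x + g x) = a * Phi f + Phi g) ->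
    (exists C : R, forall (f : X -> R) (M : R), in_dual f -> 0 <= M ->
        dual_bound f M -> `|Phi f| <= C * M) ->
    exists x0 : X, forall f : X -> R, in_dual f -> Phi f = f x0.

Definition best_set (F : set X) (x : X) : set X :=
  [set d | F d /\ forall c, F c -> `|d - c| <= `|x - c|].

Definition existence_set (F : set X) : Prop :=
  F !=set0 /\ forall x : X, best_set F x !=set0.

Definition one_complemented (V : set X) : Prop :=
  exists P : X -> X,
    [/\ lin_map P, continuous P,
        (forall x, V (P x)), (forall v, V v -> P v = v)
      & (forall x, `|P x| <= `|x|)].

End Defs.

(* If d is a best approximation in G = {f <= 0} of a point x with f x > 0, then
   for v in ker f the points d - t v stay in G, so |t v| <= |(x - d) + t v|:
   the vector z = x - d is Birkhoff-orthogonal to ker f, and f z > 0.  Writing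
   w = z / f z, every x splits as (x - f x w) + f x w with the first summand in
   ker f, and orthogonality gives |x - f x w| <= |x|, so x |-> x - f x w is a
   projection of norm one onto ker f. *)

From HB Require Import structures.
From mathcomp Require Import all_boot all_order all_algebra.
From mathcomp Require Import all_classical all_reals all_analysis.
Set Implicit Arguments. Unset Strict Implicit. Unset Printing Implicit Defensive.
Import Order.TTheory GRing.Theory Num.Theory.
Import numFieldNormedType.Exports.
Local Open Scope classical_set_scope.
Local Open Scope ring_scope.

Section KernelProjection.
Variables (R : realType) (X : normedModType R) (f : X -> R).
Hypothesis flin : lin_functional f.

Lemma lin_functional0 : f 0 = 0.
Proof.
have := flin 1 0 0; rewrite scale1r addr0 mul1r.
by move=> /esym/(canRL (addKr _)); rewrite addNr.
Qed.

Lemma lin_functionalZ a x : f (a *: x) = a * f x.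
Proof. by have := flin a x 0; rewrite !addr0 lin_functional0 addr0. Qed.

Lemma lin_functionalD x y : f (x + y) = f x + f y.
Proof. by have := flin 1 x y; rewrite scale1r mul1r. Qed.

Lemma lin_functionalN x : f (- x) = - f x.
Proof. by rewrite -scaleN1r lin_functionalZ mulN1r. Qed.

Lemma lin_functionalB x y : f (x - y) = f x - f y.
Proof. by rewrite lin_functionalD lin_functionalN. Qed.

Lemma exists_functional_gt0 : (exists x, f x != 0) -> exists x, 0 < f x.
Proof.
case=> x; case: (ltrgtP (f x) 0) => [fx_lt0 _ | fx_gt0 _ | //].
  by exists (- x); rewrite lin_functionalN oppr_gt0.
by exists x.
Qed.

Definition ker_orthogonal (w : X) : Prop :=
  forall (v : X) (t : R), f v = 0 -> `|v| <= `|v + t *: w|.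

Lemma ker_orthogonal_of_pos w :
  (forall v t, f v = 0 -> 0 < t -> `|v| <= `|v + t *: w|) ->
  ker_orthogonal w.
Proof.
move=> orth_pos v t fv; case: (ltrgtP t 0) => [t_lt0 | t_gt0 | ->].
- have := orth_pos (- v) (- t); rewrite lin_functionalN fv oppr0 oppr_gt0.
  by rewrite scaleNr -opprD !normrN; apply.
- exact: orth_pos.
- by rewrite scale0r addr0.
Qed.

Lemma ker_orthogonalZ c w : ker_orthogonal w -> ker_orthogonal (c *: w).
Proof. by move=> orth v t fv; rewrite scalerA; apply: orth. Qed.

Lemma best_approx_ker_orthogonal x d :
  best_set [set y | f y <= 0] x d -> ker_orthogonal (x - d).
Proof.
case=> /= fd best; apply: ker_orthogonal_of_pos => v t fv t_gt0.
have /best : f (d - t^-1 *: v) <= 0.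
  by rewrite lin_functionalB lin_functionalZ fv mulr0 subr0.
rewrite opprB addrC subrK addrA addrAC -(ler_pM2l t_gt0).
have normZt (u : X) : t * `|u| = `|t *: u| by rewrite normrZ gtr0_norm.
by rewrite !normZt scalerDr scalerA divff ?gt_eqF // scale1r (addrC v).
Qed.

Definition ker_proj (w : X) (x : X) : X := x - f x *: w.

Lemma ker_proj_lin w : lin_map (ker_proj w).
Proof.
move=> a x y; rewrite /ker_proj flin scalerDl -scalerA scalerBr.
by rewrite opprD addrACA.
Qed.

Lemma ker_proj_continuous w : continuous f -> continuous (ker_proj w).
Proof.
by move=> fcont x; apply: cvgB; [exact: cvg_id | apply: cvgZr_tmp; exact: fcont].
Qed.

Lemma ker_proj_ker w x : f w = 1 -> f (ker_proj w x) = 0.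
Proof.
by move=> fw; rewrite lin_functionalB lin_functionalZ fw mulr1 subrr.
Qed.

Lemma ker_proj_id w v : f v = 0 -> ker_proj w v = v.
Proof. by move=> fv; rewrite /ker_proj fv scale0r subr0. Qed.

Lemma ker_proj_norm w x :
  f w = 1 -> ker_orthogonal w -> `|ker_proj w x| <= `|x|.
Proof.
move=> fw orth; have := orth _ (f x) (ker_proj_ker x fw).
by rewrite /ker_proj subrK.
Qed.

Lemma one_complemented_ker w :
  continuous f -> f w = 1 -> ker_orthogonal w ->
  one_complemented [set x | f x = 0].
Proof.
move=> fcont fw orth; exists (ker_proj w); split.
- exact: ker_proj_lin.
- exact: ker_proj_continuous.
- by move=> x; apply: ker_proj_ker.
- by move=> v; apply: ker_proj_id.
- by move=> x; apply: ker_proj_norm.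
Qed.

Lemma exists_normalized_ker_orthogonal :
  (exists x, f x != 0) -> existence_set [set y | f y <= 0] ->
  exists w, f w = 1 /\ ker_orthogonal w.
Proof.
move=> /exists_functional_gt0 [x fx_gt0] [_ /(_ x) [d best_d]].
have fz_gt0 : 0 < f (x - d).
  by rewrite lin_functionalB subr_gt0 (le_lt_trans best_d.1).
exists ((f (x - d))^-1 *: (x - d)); split.
  by rewrite lin_functionalZ mulVf ?gt_eqF.
exact/ker_orthogonalZ/best_approx_ker_orthogonal.
Qed.

End KernelProjection.

Theorem theorem8 (R : realType) (X : completeNormedModType R) (f : X -> R) :
  reflexive_space X ->
  in_dual f -> (exists x : X, f x != 0) ->
  existence_set [set x : X | f x <= 0] ->
  one_complemented [set x : X | f x = 0].
Proof.
move=> _ [flin fcont] f_nz Gex.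
have [w [fw orth]] := exists_normalized_ker_orthogonal flin f_nz Gex.
exact: one_complemented_ker fcont fw orth.
Qed.
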